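(* Let $w,u$ be integers with $w/2 \le u < w$, fix a sign, and let $q = 2^w - 2^u \pm 1$. Let $\lambda$ be a positive integer multiple of $q$, and let $b = \lambda/q$. Define $c = \lfloor \lambda/2^w \rfloor$ and, for integers $x$, $$v(x) = \left\lfloor -\frac{x(2^u \mp 1)}{2^w} \right\rfloor, \qquad f(x) = x + v(x),$$ where $\mp$ is the sign opposite to the one in $q$, so that $q = 2^w - (2^u \mp 1)$. Let $b_0 = c$ and $b_{i+1} = b_i + (c - f(b_i))$. Let $N$ be the least index with $f(b_N) = c$. Then $b_i \le b$ for every $0 \le i \le N$.
   Context: The sequence $b_0, b_1, \dots, b_N$ consists of the values produced by the loop of a division algorithm. The loop starts at $b_0 = c$, repeats the update $b_{i+1} = b_i + (c - f(b_i))$ while $f(b_i) \ne c$, and stops at the first index $N$ with $f(b_N) = c$. *)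

(* integers Z, Z.div is floor division for positive divisors. *)
From Stdlib Require Export ZArith.
Open Scope Z_scope.

(* s is the sign (+1 or -1) in q = 2^w - 2^u + s = 2^w - (2^u - s). *)
Definition qval (w u : nat) (s : Z) : Z :=
  2 ^ Z.of_nat w - 2 ^ Z.of_nat u + s.

Definition vfun (w u : nat) (s x : Z) : Z :=
  (- (x * (2 ^ Z.of_nat u - s))) / 2 ^ Z.of_nat w.

Definition ffun (w u : nat) (s x : Z) : Z := x + vfun w u s x.

Definition cval (w : nat) (lam : Z) : Z := lam / 2 ^ Z.of_nat w.

Fixpoint bseq (w u : nat) (s lam : Z) (i : nat) : Z :=
  match i with
  | O => cval w lam
  | S i' => let bi := bseq w u s lam i' in bi + (cval w lam - ffun w u s bi)
  end.

(* Writing K = 2^u - s >= 0 and b = lam / q, the relation lam = b (2^w - K) gives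
   c = b + v(b).  Since v is antitone, the recurrence b_(i+1) = c - v(b_i) keeps
   b_i <= b forever: from b_i <= b we get v(b) <= v(b_i), hence
   b_(i+1) = b + v(b) - v(b_i) <= b.  The stopping index N plays no role. *)
From Stdlib Require Import ZArith Lia.
Open Scope Z_scope.

Section Recurrence.

Variables (w u : nat) (s : Z).

Hypothesis s_le_pow : s <= 2 ^ Z.of_nat u.

Lemma vfun_antitone (x y : Z) : x <= y -> vfun w u s y <= vfun w u s x.
Proof.
  intros Hxy; unfold vfun.
  apply Z.div_le_mono; [apply Z.pow_pos_nonneg; lia | nia].
Qed.

Lemma cval_mul_qval (b : Z) : cval w (b * qval w u s) = b + vfun w u s b.
Proof.
  unfold cval, vfun, qval.
  rewrite <- Z.div_add_l by (apply Z.pow_nonzero; lia).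
  f_equal; ring.
Qed.

Lemma bseq_succ (lam : Z) (i : nat) :
  bseq w u s lam (S i) = cval w lam - vfun w u s (bseq w u s lam i).
Proof. simpl; unfold ffun; ring. Qed.

Lemma bseq_le_quotient (b : Z) (i : nat) :
  0 <= b -> bseq w u s (b * qval w u s) i <= b.
Proof.
  intros Hb.
  assert (Hvb : vfun w u s b <= 0).
  { assert (Hv0 : vfun w u s 0 = 0) by (unfold vfun; apply Z.div_0_l, Z.pow_nonzero; lia).
    rewrite <- Hv0; apply vfun_antitone; exact Hb. }
  induction i as [|i IH].
  - simpl; rewrite cval_mul_qval; lia.
  - rewrite bseq_succ, cval_mul_qval.
    pose proof (vfun_antitone _ _ IH); lia.
Qed.

End Recurrence.

Lemma qval_pos (w u : nat) (s : Z) :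
  (1 <= u)%nat -> (u < w)%nat -> -1 <= s -> 0 < qval w u s.
Proof.
  intros Hu Huw Hs; unfold qval.
  assert (H2u : 2 <= 2 ^ Z.of_nat u).
  { change 2 with (2 ^ 1) at 1; apply Z.pow_le_mono_r; lia. }
  assert (Hw : 2 * 2 ^ Z.of_nat u <= 2 ^ Z.of_nat w).
  { rewrite <- Z.pow_succ_r by lia; apply Z.pow_le_mono_r; lia. }
  lia.
Qed.

Theorem theorem2 (w u : nat) (s lam : Z) :
  (w <= 2 * u)%nat -> (u < w)%nat ->
  (s = 1 \/ s = -1) ->
  0 < lam -> (qval w u s | lam) ->
  forall N : nat,
    ffun w u s (bseq w u s lam N) = cval w lam ->
    (forall i : nat, (i < N)%nat -> ffun w u s (bseq w u s lam i) <> cval w lam) ->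
    forall i : nat, (i <= N)%nat -> bseq w u s lam i <= lam / qval w u s.
Proof.
  intros Hwu Huw Hs Hlam [b ->] N _ _ i _.
  assert (Hq : 0 < qval w u s) by (apply qval_pos; lia).
  assert (Hs_le : s <= 2 ^ Z.of_nat u) by (pose proof (Z.pow_pos_nonneg 2 (Z.of_nat u)); lia).
  rewrite Z.div_mul by lia.
  apply bseq_le_quotient; [exact Hs_le | nia].
Qed.
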